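(* Let $G(n,4,1)$ be the graph whose vertices are the $4$-element subsets of $[n]$, two of them adjacent iff they intersect in exactly one element. For a set $A$ of vertices let $d(A)=\max_{x\neq y}|\{v\in A:\{x,y\}\subset v\}|$. If $A$ is an independent set in $G(n,4,1)$ with $d(A)\le \frac{(tn)^2}{2}$ for some $t\in(0,1)$, then $$|A|\le (1+o(1))\max\left(\frac{n^2}{8},\frac{tn^2}{2}\right),$$ where $o(1)\to 0$ as $n\to\infty$ and does not depend on the particular set $A$. *)

From mathcomp Require Import all_boot all_order all_algebra.
From mathcomp Require Import reals.
Set Implicit Arguments. Unset Strict Implicit. Unset Printing Implicit Defensive.

Definition vertex_set (n : nat) (A : {set {set 'I_n}}) : Prop :=
  forall v, v \in A -> #|v| = 4.

Definition independent_G41 (n : nat) (A : {set {set 'I_n}}) : Prop :=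
  forall u v, u \in A -> v \in A -> #|u :&: v| != 1.

(* d(A) = max_{x <> y} |{ v in A : {x,y} subset v }|  (0 if n < 2). *)
Definition dA (n : nat) (A : {set {set 'I_n}}) : nat :=
  \max_(p : 'I_n * 'I_n | p.1 != p.2) #|[set v in A | [set p.1; p.2] \subset v]|.

From mathcomp Require Import all_boot all_order all_algebra.
From mathcomp Require Import reals.
From mathcomp Require Import zify lra.

(* Call x and y twins if they lie in exactly the same members of A.  Since two
   members never meet in exactly one point, a point with two twins forces a
   point lying in a single member, and there are at most n such members; in
   every other member each point is twinless or has exactly one twin (its mate).
   A member made of twinless points is pinned down, among at most 64
   candidates, by one of its points together with points taken in members
   separating pairs of its points, so there are O(n) of them.  A member made of
   two pairs of mates is determined by the pairs, giving at most p^2/8 of them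
   when p points have a mate.  The remaining members have the form
   {x, x', a, b} with x' the mate of x and a, b twinless; each twinless point
   lies in such members for at most one pair {x, x'}, and for fixed x there are
   at most min(d(A), s_x^2/2) <= t n s_x / 2 of them, where s_x counts the
   twinless points involved and sum_x s_x <= 2 (n - p).  Altogether
   |A| <= 129 n + p^2/8 + t n (n - p)/2, and the last two terms interpolate
   between n^2/8 and t n^2/2. *)

Set Implicit Arguments. Unset Strict Implicit. Unset Printing Implicit Defensive.
Import Order.TTheory GRing.Theory Num.Theory.

Lemma leq_card_bigcup (I T : finType) (P : {pred I}) (F : I -> {set T}) :
  #|\bigcup_(i in P) F i| <= \sum_(i in P) #|F i|.
Proof.
apply: (big_ind2 (fun (S : {set T}) m => #|S| <= m)) => [|S1 m1 S2 m2 h1 h2|//].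
- by rewrite cards0.
- exact: leq_trans (leq_card_setU _ _) (leq_add h1 h2).
Qed.

Lemma leq_card_sum_fibres (I T : finType) (P : {pred I}) (V : {set T})
    (R : I -> T -> bool) :
  (forall v, v \in V -> exists2 i, i \in P & R i v) ->
  #|V| <= \sum_(i in P) #|[set v in V | R i v]|.
Proof.
move=> cover; apply: leq_trans (leq_card_bigcup _ _); apply: subset_leq_card.
apply/subsetP => v vV; have [i iP Riv] := cover v vV.
by apply/bigcupP; exists i; rewrite ?inE ?vV.
Qed.

Lemma sum_card_fibresC (I T : finType) (P : {pred I}) (V : {pred T})
    (R : I -> T -> bool) :
  \sum_(i in P) #|[set v in V | R i v]| = \sum_(v in V) #|[set i in P | R i v]|.
Proof.
have card_sep (U : finType) (Y : {pred U}) (Q : pred U) :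
    #|[set u in Y | Q u]| = \sum_(u in Y) Q u.
  rewrite -sum1_card big_mkcond [RHS]big_mkcond /=.
  by apply: eq_bigr => u _; rewrite inE; case: (u \in Y); case: (Q u).
under eq_bigr do rewrite card_sep.
under [RHS]eq_bigr do rewrite card_sep.
exact: exchange_big.
Qed.

Lemma card_pairs_dep_le (I J : finType) (X : {set I}) (F : I -> {set J}) m :
  (forall i, i \in X -> #|F i| <= m) ->
  #|[set p : I * J | (p.1 \in X) && (p.2 \in F p.1)]| <= #|X| * m.
Proof.
move=> leFm; rewrite -sum_nat_const.
apply: leq_trans (leq_card_sum_fibres (P := mem X) (R := fun i p => p.1 == i) _) _.
  by move=> p; rewrite inE => /andP[pX _]; exists p.1.
apply: leq_sum => i iX; apply: leq_trans (leFm i iX).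
apply: leq_trans (leq_imset_card (pair i) (F i)); apply: subset_leq_card.
apply/subsetP => -[a b]; rewrite !inE /= => /andP[/andP[_ bF] /eqP ai].
by apply/imsetP; exists b; rewrite -?ai.
Qed.

Lemma exists_other_mem (T : finType) (X : {set T}) x :
  #|X| != 1 -> x \in X -> exists2 y, y \in X & y != x.
Proof.
move=> X_neq1 xX; have [/existsP[y /andP[yX yx]]|/existsPn only_x] :=
  boolP [exists y in X, y != x]; first by exists y.
case/negP: X_neq1; apply/cards1P; exists x; apply/setP => y; rewrite in_set1.
by apply/idP/eqP => [yX|->//]; have := only_x y; rewrite yX negbK => /eqP.
Qed.

Lemma cards3_uniq (T : finType) (x y z : T) :
  uniq [:: x; y; z] -> #|[set x; y; z]| = 3.
Proof.
rewrite /= !inE !negb_or => /and3P[/andP[xy xz] yz _].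
by rewrite -setUA !cardsU1 cards1 !inE !negb_or xy xz yz.
Qed.

Section Family.

Variables (n : nat) (A : {set {set 'I_n}}).
Hypotheses (A4 : vertex_set A) (A_indep : independent_G41 A).

Lemma size_le4_member v (s : seq 'I_n) :
  v \in A -> uniq s -> {subset s <= v} -> size s <= 4.
Proof.
move=> vA us sv; rewrite -(A4 vA) cardE; apply: uniq_leq_size => // e /sv.
by rewrite mem_enum.
Qed.

Lemma five_sub_member_false v (s : seq 'I_n) :
  v \in A -> uniq s -> {subset s <= v} -> size s = 5 -> False.
Proof. by move=> vA us sv s5; have := size_le4_member vA us sv; rewrite s5. Qed.

Lemma mem_of_sub4_member v (s : seq 'I_n) e : v \in A -> uniq s -> size s = 4 ->
  {subset s <= v} -> e \in v -> e \in s.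
Proof.
move=> vA us s4 sv ev; apply/negPn/negP => es.
apply: (five_sub_member_false (s := e :: s) vA); rewrite /= ?es ?s4 //.
by move=> z; rewrite inE => /predU1P[->|/sv].
Qed.

Lemma member_eq_of_sub4 u v (s : seq 'I_n) : u \in A -> v \in A ->
  uniq s -> size s = 4 -> {subset s <= u} -> {subset s <= v} -> u = v.
Proof.
move=> uA vA us s4 su sv; apply/setP => e.
apply/idP/idP => [/(mem_of_sub4_member uA us s4 su)/sv //|].
by move/(mem_of_sub4_member vA us s4 sv)/su.
Qed.

Lemma meet_other u v x : u \in A -> v \in A -> x \in u -> x \in v ->
  exists y, [/\ y \in u, y \in v & y != x].
Proof.
move=> uA vA xu xv; have xuv : x \in u :&: v by rewrite inE xu xv.
have [y] := exists_other_mem (A_indep uA vA) xuv.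
by rewrite inE => /andP[yu yv] yx; exists y.
Qed.

Definition star x := [set s in A | x \in s].
Definition twin x y := (y != x) && (star x == star y).
Definition twinless x := [forall y, ~~ twin x y].
Definition paired x := #|[set y | twin x y]| == 1.
Definition mate x := odflt x [pick y | twin x y].

Lemma twin_sym x y : twin x y = twin y x.
Proof. by rewrite /twin eq_sym [star x == _]eq_sym. Qed.

Lemma twin_neq x y : twin x y -> y != x.
Proof. by case/andP. Qed.

Lemma twin_mem x y s : twin x y -> s \in A -> (x \in s) = (y \in s).
Proof.
case/andP=> _ /eqP star_xy sA.
have : (s \in star x) = (s \in star y) by rewrite star_xy.
by rewrite !inE sA.
Qed.

Lemma twin_trans x y z : twin x y -> twin y z -> z != x -> twin x z.
Proof. by rewrite /twin => /andP[_ /eqP->] /andP[_ /eqP->] ->; rewrite eqxx. Qed.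

Lemma twinless_star x y : twinless x -> y != x -> star x != star y.
Proof. by move=> /forallP /(_ y); rewrite /twin negb_and negbK => /orP[->|]. Qed.

Lemma twin_mate x : paired x -> twin x (mate x).
Proof.
case/cards1P=> y twins_x; rewrite /mate; case: pickP => [//|no_twin].
by have := set11 y; rewrite -twins_x inE no_twin.
Qed.

Lemma mate_uniq x y : paired x -> twin x y -> y = mate x.
Proof.
move=> px xy; have xmx := twin_mate px; case/cards1P: px => z twins_x.
have := set11 z; rewrite -twins_x.
by move: xy xmx; rewrite -!(in_set (twin x)) twins_x !in_set1 => /eqP-> /eqP->.
Qed.

Lemma mate_neq x : paired x -> mate x != x.
Proof. by move/twin_mate/twin_neq. Qed.

Lemma mem_mate x s : paired x -> s \in A -> x \in s -> mate x \in s.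
Proof. by move=> px sA xs; rewrite -(twin_mem (twin_mate px) sA). Qed.

Lemma paired_mate x : paired x -> paired (mate x).
Proof.
move=> px; have xmx := twin_mate px; apply/cards1P; exists x.
apply/setP => y; rewrite in_set1 inE; apply/idP/eqP => [mxy|->]; last first.
  by rewrite twin_sym.
apply/eqP; apply: contraT => yx.
have yE := mate_uniq px (twin_trans xmx mxy yx).
by move: mxy; rewrite -yE /twin eqxx.
Qed.

Lemma twinless_npaired x : twinless x -> ~~ paired x.
Proof.
move=> /forallP x_tl; rewrite /paired; suff -> : [set y | twin x y] = set0.
  by rewrite cards0.
by apply/setP => y; rewrite !inE (negbTE (x_tl y)).
Qed.

Lemma twinless_neq_paired a x : twinless a -> paired x -> a != x.
Proof. by move=> ta; apply: contraTneq => <-; exact: twinless_npaired. Qed.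

Lemma mates_disjoint x y : paired x -> paired y -> y != x -> y != mate x ->
  mate y != x /\ mate y != mate x.
Proof.
move=> px py yx ymx; split; apply: contra ymx => /eqP my; apply/eqP.
  by apply: mate_uniq px _; rewrite twin_sym -my twin_mate.
apply: mate_uniq px (twin_trans (twin_mate px) _ yx).
by rewrite -my twin_sym twin_mate.
Qed.

Lemma uniq_mates x y : paired x -> paired y -> y != x -> y != mate x ->
  uniq [:: x; mate x; y; mate y].
Proof.
move=> px py yx ymx; have [myx mymx] := mates_disjoint px py yx ymx.
rewrite /= !inE !negb_or (eq_sym x (mate x)) (eq_sym x y) (eq_sym x (mate y)).
by rewrite (eq_sym (mate x) y) (eq_sym (mate x) (mate y)) yx myx ymx mymx
  (eq_sym y) !mate_neq.
Qed.

Lemma uniq_twinless_mates c x y : twinless c -> paired x -> paired y ->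
  y != x -> y != mate x -> uniq [:: c; x; mate x; y; mate y].
Proof.
move=> tc px py yx ymx; rewrite cons_uniq uniq_mates // andbT !inE !negb_or.
by rewrite !(twinless_neq_paired tc) ?paired_mate.
Qed.

Lemma uniq_twinless2_mates a b x : twinless a -> twinless b -> a != b -> paired x ->
  uniq [:: a; b; x; mate x].
Proof.
move=> ta tb ab px; rewrite /= !inE !negb_or ab (eq_sym x (mate x)) mate_neq //.
by rewrite !(twinless_neq_paired ta) ?(twinless_neq_paired tb) ?paired_mate.
Qed.

Definition separator x y := odflt set0 [pick w in A | (x \in w) != (y \in w)].

Lemma card_separator x y : #|separator x y| <= 4.
Proof.
by rewrite /separator; case: pickP => [w /andP[/A4->]|_] //=; rewrite cards0.
Qed.

(* [separator x y] meets [s] in [x] or [y], hence in a second point. *)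
Lemma separator_meet x y s : x != y -> star x != star y ->
  s \in A -> x \in s -> y \in s ->
  exists u, [/\ u \in s, u \in separator x y, u != x & u != y].
Proof.
move=> xy star_xy sA xs ys; rewrite /separator; case: pickP => /= [w|no_sep].
  case/andP=> wA; case xw: (x \in w); case yw: (y \in w) => // _.
    have [u [us uw ux]] := meet_other sA wA xs xw.
    by exists u; split=> //; apply: contraTneq uw => ->; rewrite yw.
  have [u [us uw uy]] := meet_other sA wA ys yw.
  by exists u; split=> //; apply: contraTneq uw => ->; rewrite xw.
case/eqP: star_xy; apply/setP => w; rewrite !inE.
by have := no_sep w; case: (w \in A) => //= /negbFE/eqP->.
Qed.

Definition codeg (T : {set 'I_n}) := #|[set s in A | T \subset s]|.

Lemma member_setU1 (T : {set 'I_n}) s p : #|T| = 3 -> s \in A ->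
  T \subset s -> p \in s -> p \notin T -> s = p |: T.
Proof.
move=> T3 sA Ts ps pT; apply/eqP; rewrite eq_sym eqEcard cardsU1 pT T3 A4 //.
by rewrite subUset sub1set ps Ts.
Qed.

Lemma member_out3 (T : {set 'I_n}) s : #|T| = 3 -> s \in A ->
  exists2 p, p \in s & p \notin T.
Proof.
move=> T3 sA; have : 0 < #|s :\: T|.
  rewrite cardsD A4 // subn_gt0 ltnS -T3; exact/subset_leq_card/subsetIr.
by case/card_gt0P => p; rewrite inE => /andP[pT ps]; exists p.
Qed.

(* The members through a triple [T] are the [p |: T], so more than four of them
   cannot all take their fourth point [p] in a set of size four. *)
Lemma petal_avoiding (T W : {set 'I_n}) : #|T| = 3 -> 4 < codeg T -> #|W| <= 4 ->
  exists s p, [/\ s \in A, T \subset s, p \in s, p \notin T & p \notin W].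
Proof.
move=> T3 big W4.
have [/existsP[s /existsP[p /and5P[]]]|/existsPn no_petal] := boolP
  [exists s, [exists p, [&& s \in A, T \subset s, p \in s, p \notin T & p \notin W]]].
  by exists s, p.
suff : codeg T <= 4 by rewrite leqNgt big.
apply: leq_trans W4; apply: leq_trans (leq_imset_card (fun p => p |: T) W).
apply: subset_leq_card; apply/subsetP => s; rewrite inE => /andP[sA Ts].
have [p ps pT] := member_out3 T3 sA.
have pW : p \in W.
  by move/existsPn: (no_petal s) => /(_ p); rewrite sA Ts ps pT negbK.
by apply/imsetP; exists p => //; apply: member_setU1.
Qed.

Definition Apriv := [set v in A | [exists z in v, #|star z| == 1]].
Definition Atwinless := [set v in A | [forall x in v, twinless x]].
Definition heavy (v : {set 'I_n}) :=
  [exists T : {set 'I_n}, [&& T \subset v, #|T| == 3 & 4 < codeg T]].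
Definition Aheavy := [set v in Atwinless | heavy v].
Definition Alight := [set v in Atwinless | ~~ heavy v].
Definition Apaired := [set v in A | [forall x in v, paired x]].
Definition Amixed :=
  [set v in A | [&& v \notin Apriv, v \notin Atwinless & v \notin Apaired]].
Definition paired_pts := [set x | paired x].
Definition twinless_pts := [set x | twinless x].

Lemma card_Apriv : #|Apriv| <= n.
Proof.
apply: leq_trans (leq_card_sum_fibres (P := [set: 'I_n])
  (R := fun z (v : {set 'I_n}) => (z \in v) && (#|star z| == 1)) _) _.
  move=> v; rewrite inE => /andP[_ /existsP[z /andP[zv z1]]].
  by exists z; rewrite ?inE ?zv.
rewrite -[leqRHS]card_ord -cardsT -sum1_card leq_sum // => z _.
apply/card_le1_eqP => u v; rewrite !inE => /and3P[/andP[uA _] zu /cards1P[w star_z]].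
case/and3P=> /andP[vA _] zv _.
have : u \in star z by rewrite inE uA.
have : v \in star z by rewrite inE vA.
by rewrite star_z !in_set1 => /eqP-> /eqP->.
Qed.

Lemma Atwinless_member v : v \in Atwinless -> v \in A.
Proof. by rewrite inE => /andP[]. Qed.

Lemma Atwinless_twinless v x : v \in Atwinless -> x \in v -> twinless x.
Proof. by rewrite inE => /andP[_ /forallP tl] xv; have := tl x; rewrite xv. Qed.

Definition heavy_through z := [set v in Atwinless | (z \in v) &&
  [exists T : {set 'I_n}, [&& T \subset v, #|T| == 3, z \notin T & 4 < codeg T]]].

Lemma heavy_through_mem z v : v \in heavy_through z -> v \in A /\ z \in v.
Proof. by rewrite !inE => /and3P[/andP[]]. Qed.

(* Both [v0] and [v] are [z] plus a heavy triple; [x, y] are common points found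
   through petals of these triples, and [u] is found in a petal of the triple of
   [v] avoiding [separator x y]. *)
Lemma heavy_through_witness z v0 v : v0 \in heavy_through z -> v \in heavy_through z ->
  exists x y u, [/\ x \in v0, y \in v0, u \in separator x y,
                  [&& x \in v, y \in v & u \in v] & uniq [:: x; y; u; z]].
Proof.
move=> /setIdP[v0tl /andP[zv0 /existsP[T0 /and4P[T0v0 /eqP T03 zT0 bigT0]]]].
move=> /setIdP[vtl /andP[zv /existsP[T /and4P[Tv /eqP T3 zT bigT]]]].
have [v0A vA] := (Atwinless_member v0tl, Atwinless_member vtl).
have v0E : v0 = z |: T0 by apply: member_setU1.
have vE : v = z |: T by apply: member_setU1.
have [s [p [sA T0s ps pT0 pv]]] := petal_avoiding T03 bigT0 (eq_leq (A4 vA)).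
have sE : s = p |: T0 by apply: member_setU1.
have [x [xv xv0 xz]] := meet_other vA v0A zv zv0.
have xT0 : x \in T0 by move: xv0; rewrite v0E in_setU1 (negbTE xz).
have xs : x \in s by rewrite sE in_setU1 xT0 orbT.
have [y [ys yv yx]] := meet_other sA vA xs xv.
have yT0 : y \in T0.
  by move: ys; rewrite sE in_setU1 => /predU1P[yp|//]; move: pv; rewrite -yp yv.
have yz : y != z by apply: contraNneq zT0 => <-.
have xT : x \in T by move: xv; rewrite vE in_setU1 (negbTE xz).
have yT : y \in T by move: yv; rewrite vE in_setU1 (negbTE yz).
have xy : x != y by rewrite eq_sym.
have star_xy := twinless_star (Atwinless_twinless vtl xv) yx.
have [s' [p' [s'A Ts' p's' p'T p'sep]]] := petal_avoiding T3 bigT (card_separator x y).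
have s'E : s' = p' |: T by apply: member_setU1.
have xs' : x \in s' by rewrite s'E in_setU1 xT orbT.
have ys' : y \in s' by rewrite s'E in_setU1 yT orbT.
have [u [us' usep ux uy]] := separator_meet xy star_xy s'A xs' ys'.
have uT : u \in T.
  by move: us'; rewrite s'E in_setU1 => /predU1P[up|//]; move: p'sep; rewrite -up usep.
have uz : u != z by apply: contraNneq zT => <-.
exists x, y, u; rewrite xv0 (subsetP T0v0 y yT0) usep xv yv (subsetP Tv) //=.
by rewrite !inE !negb_or xy xz yz uz (eq_sym x u) ux (eq_sym y u) uy.
Qed.

Lemma card_heavy_through z : #|heavy_through z| <= 64.
Proof.
have [->|[v0 v0H]] := set_0Vmem (heavy_through z); first by rewrite cards0.
pose X := setX v0 v0.
have X16 : #|X| = 16 by rewrite cardsX A4 // (heavy_through_mem v0H).1.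
pose P := [set p : _ * 'I_n | (p.1 \in X) && (p.2 \in separator p.1.1 p.1.2)].
apply: leq_trans (leq_card_sum_fibres (P := P)
  (R := fun p (v : {set 'I_n}) => [&& p.1.1 \in v, p.1.2 \in v, p.2 \in v
                                   & uniq [:: p.1.1; p.1.2; p.2; z]]) _) _.
  move=> v /(heavy_through_witness v0H)[x [y [u [xv0 yv0 usep xyuv xyuz]]]].
  exists ((x, y), u); first by rewrite !inE /= xv0 yv0.
  by case/and3P: xyuv => /= -> -> ->.
apply: leq_trans (leq_trans _ (card_pairs_dep_le (X := X)
  (fun q _ => card_separator q.1 q.2))) _; last by rewrite X16.
rewrite -sum1_card leq_sum // => -[[x y] u] _ /=.
apply/card_le1_eqP => a b; rewrite [a \in _]inE [b \in _]inE.
move=> /andP[/heavy_through_mem[aA za] /and4P[xa ya ua xyuz]].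
move=> /andP[/heavy_through_mem[bA zb] /and4P[xb yb ub _]].
by apply/esym/(member_eq_of_sub4 (s := [:: x; y; u; z]) aA bA xyuz) => // e;
  rewrite !inE => /or4P[] /eqP->.
Qed.

Lemma card_Aheavy : #|Aheavy| <= 64 * n.
Proof.
apply: leq_trans (leq_card_sum_fibres (P := [set: 'I_n])
  (R := fun z v => v \in heavy_through z) _) _.
  move=> v; rewrite inE => /andP[vtl /existsP[T /and3P[Tv /eqP T3 bigT]]].
  have [z zv zT] := member_out3 T3 (Atwinless_member vtl).
  exists z; first by rewrite inE.
  rewrite /heavy_through inE vtl zv; apply/existsP; exists T.
  by rewrite Tv T3 eqxx zT bigT.
apply: leq_trans (_ : \sum_(z in [set: 'I_n]) 64 <= _);
  last by rewrite sum_nat_const cardsT card_ord mulnC.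
apply: leq_sum => z _.
apply: leq_trans (card_heavy_through z); apply: subset_leq_card.
by apply/subsetP => v; rewrite inE => /andP[].
Qed.

Lemma card_light_through_triple (T : {set 'I_n}) : #|T| = 3 ->
  #|[set v in Alight | T \subset v]| <= 4.
Proof.
move=> T3; have [->|[w /setIdP[wlight Tw]]] := set_0Vmem [set v in Alight | T \subset v].
  by rewrite cards0.
have : ~~ (4 < codeg T).
  move: wlight => /setIdP[_]; apply: contra => bigT.
  by apply/existsP; exists T; rewrite Tw T3 eqxx.
rewrite -leqNgt; apply: leq_trans; apply: subset_leq_card; apply/subsetP => s.
by move=> /setIdP[/setIdP[/Atwinless_member sA _] Ts]; rewrite inE sA.
Qed.

(* A light member through [x] is fixed by a point [y] of a reference member and a
   point [u] of [separator x y], up to the four members containing [{x, y, u}]. *)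
Lemma card_Alight_through x : #|[set v in Alight | x \in v]| <= 64.
Proof.
set F := [set v in Alight | x \in v].
have [->|[v0 /setIdP[/setIdP[v0tl _] xv0]]] := set_0Vmem F; first by rewrite cards0.
have v0A := Atwinless_member v0tl.
pose P := [set p : 'I_n * 'I_n | (p.1 \in v0) && (p.2 \in separator x p.1)].
apply: leq_trans (leq_card_sum_fibres (P := P) (R := fun p (v : {set 'I_n}) =>
  [&& p.1 \in v, p.2 \in v & uniq [:: x; p.1; p.2]]) _) _.
  move=> v /setIdP[/setIdP[vtl _] xv]; have vA := Atwinless_member vtl.
  have [y [yv yv0 yx]] := meet_other vA v0A xv xv0.
  have xy : x != y by rewrite eq_sym.
  have [u [uv usep ux uy]] :=
    separator_meet xy (twinless_star (Atwinless_twinless vtl xv) yx) vA xv yv.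
  exists (y, u); first by rewrite inE /= yv0 usep.
  by rewrite /= yv uv /= !inE !negb_or xy (eq_sym x u) ux (eq_sym y u) uy.
apply: leq_trans (_ : \sum_(p in P) 4 <= _).
  apply: leq_sum => -[y u] _ /=; have [xyu|nxyu] := boolP (uniq [:: x; y; u]).
    apply: leq_trans (card_light_through_triple (cards3_uniq xyu)).
    apply: subset_leq_card; apply/subsetP => v.
    move=> /setIdP[/setIdP[vlight xv] /and3P[yv uv _]]; rewrite inE vlight.
    by apply/subsetP => e; rewrite !inE => /orP[/orP[]|] /eqP->.
  apply: (@leq_trans 0) => //; rewrite leqn0 cards_eq0; apply/eqP/setP => v.
  rewrite inE [v \in set0]inE; apply/negP => /andP[_ /and3P[_ _ xyu]].
  by case/negP: nxyu.
rewrite sum_nat_const (@leq_trans (16 * 4)) // leq_mul2r /=.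
by apply: leq_trans (card_pairs_dep_le (m := 4) (fun y _ => card_separator x y)) _;
  rewrite A4.
Qed.

Lemma card_Alight : #|Alight| <= 64 * n.
Proof.
apply: leq_trans (leq_card_sum_fibres (P := [set: 'I_n])
  (R := fun x (v : {set 'I_n}) => x \in v) _) _.
  move=> v; rewrite inE => /andP[vtl _].
  have : 0 < #|v| by rewrite A4 // Atwinless_member.
  by case/card_gt0P => x xv; exists x; rewrite ?inE.
apply: leq_trans (_ : \sum_(x in [set: 'I_n]) 64 <= _);
  last by rewrite sum_nat_const cardsT card_ord mulnC.
apply: leq_sum => x _.
exact: card_Alight_through.
Qed.

(* A point with two twins [y1, y2] in [v]: the fourth point [z] of [v] lies in
   no other member [s], as [s] would meet [v] in [z] alone or in all of [v]. *)
Lemma paired_or_twinless v x : v \in A -> v \notin Apriv -> x \in v ->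
  paired x || twinless x.
Proof.
move=> vA vnpriv xv; have [_|ntl] := boolP (twinless x); first by rewrite orbT.
rewrite orbF.
move/forallPn: ntl => [y /negPn xy]; apply: contraT => npx; case/negP: vnpriv.
have : 1 < #|[set y | twin x y]|.
  by rewrite ltn_neqAle eq_sym npx; apply/card_gt0P; exists y; rewrite inE.
case/card_gt1P => y1 [y2 []]; rewrite !inE => xy1 xy2 y12.
have y1v : y1 \in v by rewrite -(twin_mem xy1 vA).
have y2v : y2 \in v by rewrite -(twin_mem xy2 vA).
have x1 : x != y1 by rewrite eq_sym (twin_neq xy1).
have x2 : x != y2 by rewrite eq_sym (twin_neq xy2).
have xy12 : uniq [:: x; y1; y2] by rewrite /= !inE !negb_or x1 x2 y12.
have [z zv] := member_out3 (cards3_uniq xy12) vA.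
rewrite !inE !negb_or => /andP[/andP[zx zy1] zy2].
rewrite ?inE vA; apply/existsP; exists z; rewrite zv; apply/cards1P; exists v.
apply/setP => s; rewrite !inE; apply/idP/eqP => [/andP[sA zs]|->]; last first.
  by rewrite vA zv.
have [xs|xs] := boolP (x \in s).
  have sub4 w : w \in A -> x \in w -> z \in w -> {subset [:: x; y1; y2; z] <= w}.
    by move=> wA xw zw e; rewrite !inE => /or4P[] /eqP->;
      rewrite // -?(twin_mem xy1 wA) -?(twin_mem xy2 wA).
  apply: (member_eq_of_sub4 sA vA _ _ (sub4 s sA xs zs) (sub4 v vA xv zv)) => //.
  by rewrite /= !inE !negb_or x1 x2 y12 !(eq_sym _ z) zx zy1 zy2.
have [e [es ev ez]] := meet_other sA vA zs zv.
have ex : e != x by apply: contraTneq es => ->.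
have ey1 : e != y1 by apply: contraTneq es => ->; rewrite -(twin_mem xy1 sA).
have ey2 : e != y2 by apply: contraTneq es => ->; rewrite -(twin_mem xy2 sA).
exfalso; apply: (five_sub_member_false (s := [:: e; z; x; y1; y2]) vA) => //.
  by rewrite /= !inE !negb_or ez ex ey1 ey2 zx zy1 zy2 x1 x2 y12.
by move=> w; rewrite !inE => /or4P[| | |/orP[]] /eqP->.
Qed.

Lemma Amixed_member v : v \in Amixed -> v \in A.
Proof. by rewrite inE => /andP[]. Qed.

Lemma Amixed_paired v : v \in Amixed -> exists2 x, x \in v & paired x.
Proof.
rewrite inE => /andP[vA /and3P[vnpriv vntl _]].
move: vntl; rewrite inE vA => /forallPn[x]; rewrite negb_imply => /andP[xv ntl].
by exists x => //; have := paired_or_twinless vA vnpriv xv; rewrite (negbTE ntl) orbF.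
Qed.

(* Otherwise [v] would contain a twinless point besides the two pairs of mates. *)
Lemma Amixed_twinless v x e : v \in Amixed -> paired x -> x \in v -> e \in v ->
  e != x -> e != mate x -> twinless e.
Proof.
move=> vmix px xv ev ex emx; have vA := Amixed_member vmix.
move: (vmix); rewrite inE => /andP[_ /and3P[vnpriv _ vnpair]].
case/orP: (paired_or_twinless vA vnpriv ev) => // pe; exfalso.
move: vnpair; rewrite inE vA => /forallPn[c]; rewrite negb_imply => /andP[cv npc].
have tc : twinless c by move: (paired_or_twinless vA vnpriv cv); rewrite (negbTE npc).
apply: (five_sub_member_false vA (uniq_twinless_mates tc px pe ex emx)) => //.
by move=> w; rewrite !inE => /or4P[| | |/orP[]] /eqP->; rewrite ?mem_mate.
Qed.

Lemma mixed_memberE v x p q : v \in A -> paired x -> twinless p -> twinless q ->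
  p != q -> x \in v -> p \in v -> q \in v -> v = [set x; mate x; p; q].
Proof.
move=> vA px tp tq pq xv pv qv; apply/setP => e; rewrite !inE -!orbA.
apply/idP/idP => [ev|]; last by case/or4P => /eqP->; rewrite ?mem_mate.
have : e \in [:: p; q; x; mate x].
  apply: (mem_of_sub4_member vA (uniq_twinless2_mates tp tq pq px)) => // w.
  by rewrite !inE => /or4P[] /eqP->; rewrite ?mem_mate.
by rewrite !inE => /or4P[] ->; rewrite ?orbT.
Qed.

(* [s] meets the member in [p], hence in a second point, which can only be [y]
   or its mate. *)
Lemma mate_in_meet s y p q : s \in A -> [set y; mate y; p; q] \in A -> paired y ->
  p \in s -> q \notin s -> y \in s.
Proof.
move=> sA wA py ps qs; have pw : p \in [set y; mate y; p; q] by rewrite !inE eqxx orbT.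
have [d [ds + dp]] := meet_other sA wA ps pw; rewrite !inE -!orbA (negbTE dp) /=.
case/or3P=> /eqP dE; rewrite -?dE //; last by rewrite -dE ds in qs.
by rewrite (twin_mem (twin_mate py) sA) -dE.
Qed.

Lemma mixed_twin_side x x' p q s : paired x -> paired x' -> x' != x -> x' != mate x ->
  twinless p -> [set x; mate x; p; q] \in A -> [set x'; mate x'; p; q] \in A ->
  s \in A -> p \in s -> q \in s.
Proof.
move=> px px' x'x x'mx tp vA v'A sA ps; apply/negPn/negP => qs.
have xs := mate_in_meet sA vA px ps qs.
have x's := mate_in_meet sA v'A px' ps qs.
apply: (five_sub_member_false sA (uniq_twinless_mates tp px px' x'x x'mx)) => //.
by move=> w; rewrite !inE => /or4P[| | |/orP[]] /eqP->; rewrite ?mem_mate.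
Qed.

(* Two mixed members through a twinless [a] with different pairs would share a
   second twinless point [c], and then [a] and [c] would be twins. *)
Lemma mixed_pair_uniq x x' a v v' : paired x -> paired x' -> twinless a ->
  v \in Amixed -> x \in v -> a \in v -> v' \in Amixed -> x' \in v' -> a \in v' ->
  (x' == x) || (x' == mate x).
Proof.
move=> px px' ta vmix xv av v'mix x'v' av'.
apply: contraT; rewrite negb_or => /andP[x'x x'mx]; exfalso.
have [vA v'A] := (Amixed_member vmix, Amixed_member v'mix).
have [mx'x mx'mx] := mates_disjoint px px' x'x x'mx.
have [c [cv cv' ca]] := meet_other vA v'A av av'.
have v'_twinless e : e \in v' -> e != x' -> e != mate x' -> twinless e :=
  Amixed_twinless v'mix px' x'v'.
have cx : c != x.
  apply: contraTneq cv' => ->; apply/negP => xv'.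
  have := v'_twinless x xv'; rewrite eq_sym x'x eq_sym mx'x => /(_ isT isT).
  by move/twinless_npaired; rewrite px.
have cmx : c != mate x.
  apply: contraTneq cv' => ->; apply/negP => mxv'.
  have := v'_twinless _ mxv'; rewrite eq_sym x'mx eq_sym mx'mx => /(_ isT isT).
  by move/twinless_npaired; rewrite paired_mate.
have tc := Amixed_twinless vmix px xv cv cx cmx.
have ac : a != c by rewrite eq_sym.
have vE := mixed_memberE vA px ta tc ac xv av cv.
have v'E := mixed_memberE v'A px' ta tc ac x'v' av' cv'.
move/forallP: (ta) => /(_ c); rewrite /twin ca /= => /negP; apply.
apply/eqP/setP => s; rewrite !inE; have [sA /=|//] := boolP (s \in A).
move: vA v'A; rewrite vE v'E => vA v'A; apply/idP/idP.
  exact: mixed_twin_side px px' x'x x'mx ta vA v'A sA.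
rewrite setUAC in vA; rewrite setUAC in v'A.
exact: mixed_twin_side px px' x'x x'mx tc vA v'A sA.
Qed.

Definition mixed_at x := [set v in Amixed | x \in v].
Definition mixed_link x := [set a in twinless_pts | [exists v in mixed_at x, a \in v]].

Lemma card_mixed_at_le_dA x : paired x -> #|mixed_at x| <= dA A.
Proof.
move=> px; apply: leq_trans (_ : #|[set v in A | [set x; mate x] \subset v]| <= _).
  apply: subset_leq_card; apply/subsetP => v /setIdP[vmix xv].
  by rewrite inE Amixed_member // subUset !sub1set xv mem_mate // Amixed_member.
apply: (leq_bigmax_cond (F := fun p : 'I_n * 'I_n =>
  #|[set v in A | [set p.1; p.2] \subset v]|) (x, mate x)).
by rewrite /= eq_sym mate_neq.
Qed.

Lemma two_outside_mates v x : v \in A -> paired x -> x \in v ->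
  2 <= #|v :\: [set x; mate x]|.
Proof.
move=> vA px xv; rewrite cardsD A4 //.
have : #|v :&: [set x; mate x]| <= 2.
  by apply: leq_trans (subset_leq_card (subsetIr _ _)) _; rewrite cards2; case: (_ != _).
lia.
Qed.

Lemma Amixed_outside_mates v x e : v \in Amixed -> x \in v -> paired x ->
  e \in v :\: [set x; mate x] -> e \in mixed_link x.
Proof.
move=> vmix xv px /setDP[ev]; rewrite in_set2 negb_or => /andP[ex emx].
rewrite inE [e \in twinless_pts]inE (Amixed_twinless vmix px xv ev ex emx).
by apply/existsP; exists v; rewrite ev andbT inE vmix.
Qed.

(* Each member of [mixed_at x] is [{x, mate x, a, b}] with [a <> b] in
   [mixed_link x], and is determined by the ordered pair [(a, b)]. *)
Lemma card_mixed_at_sq x : paired x ->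
  2 * #|mixed_at x| <= #|mixed_link x| * #|mixed_link x|.
Proof.
move=> px; have links2 : 2 * #|mixed_at x| <=
    \sum_(v in mixed_at x) #|[set a in mixed_link x | a \in v]|.
  rewrite mulnC -sum_nat_const leq_sum // => v /setIdP[vmix xv].
  apply: leq_trans (two_outside_mates (Amixed_member vmix) px xv) _.
  apply: subset_leq_card; apply/subsetP => e eout.
  by rewrite inE (Amixed_outside_mates vmix xv px eout) (setDP eout).1.
apply: leq_trans links2 _; rewrite sum_card_fibresC -sum_nat_const leq_sum // => a.
case/setIdP; rewrite inE => ta _.
apply: leq_trans (leq_card_sum_fibres (P := mixed_link x)
  (R := fun b (v : {set 'I_n}) => (b \in v) && (b != a)) _) _.
  move=> v /setIdP[/setIdP[vmix xv] av]; have vA := Amixed_member vmix.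
  case/card_gt1P: (two_outside_mates vA px xv) => b1 [b2 [b1out b2out b12]].
  have [b bout ba] : exists2 b, b \in v :\: [set x; mate x] & b != a.
    by have [b1a|] := eqVneq b1 a; [exists b2; rewrite // -b1a eq_sym|exists b1].
  exists b; first exact: Amixed_outside_mates bout.
  by rewrite (setDP bout).1 ba.
rewrite -sum1_card leq_sum // => b; case/setIdP; rewrite inE => tb _.
apply/card_le1_eqP => v1 v2.
move=> /setIdP[/setIdP[/setIdP[v1mix xv1] av1] /andP[bv1 ba]].
move=> /setIdP[/setIdP[/setIdP[v2mix xv2] av2] /andP[bv2 _]].
have [v1A v2A] := (Amixed_member v1mix, Amixed_member v2mix).
apply/esym/(member_eq_of_sub4 v1A v2A (uniq_twinless2_mates tb ta ba px)) => //.
- by move=> e; rewrite !inE => /or4P[] /eqP->; rewrite ?mem_mate.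
- by move=> e; rewrite !inE => /or4P[] /eqP->; rewrite ?mem_mate.
Qed.

Lemma sum_card_mixed_link : \sum_(x in paired_pts) #|mixed_link x| <= 2 * #|twinless_pts|.
Proof.
rewrite /mixed_link (sum_card_fibresC paired_pts twinless_pts).
rewrite mulnC -sum_nat_const leq_sum // => a; rewrite inE => ta.
set G := [set x in paired_pts | _].
have [->|[x0]] := set_0Vmem G; first by rewrite cards0.
rewrite !inE => /andP[px0 /existsP[v0 /andP[]]]; rewrite inE => /andP[v0mix x0v0 av0].
apply: leq_trans (_ : #|[set x0; mate x0]| <= 2); last first.
  by rewrite cards2; case: (_ != _).
apply: subset_leq_card; apply/subsetP => x; rewrite !inE.
move=> /andP[px /existsP[v /andP[]]]; rewrite inE => /andP[vmix xv av].
exact: (mixed_pair_uniq px0 px ta v0mix x0v0 av0 vmix xv av).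
Qed.

Lemma card_Amixed_le_sum : 2 * #|Amixed| <= \sum_(x in paired_pts) #|mixed_at x|.
Proof.
rewrite /mixed_at (sum_card_fibresC paired_pts Amixed (fun x v => x \in v)).
rewrite mulnC -sum_nat_const leq_sum // => v vmix.
have [x xv px] := Amixed_paired vmix.
apply: leq_trans (_ : #|[set x; mate x]| <= _); first by rewrite cards2 eq_sym mate_neq.
apply: subset_leq_card; apply/subsetP => e; rewrite !inE => /orP[] /eqP->.
  by rewrite px xv.
by rewrite paired_mate // mem_mate // Amixed_member.
Qed.

Lemma Apaired_member v : v \in Apaired -> v \in A.
Proof. by rewrite inE => /andP[]. Qed.

Lemma Apaired_paired v e : v \in Apaired -> e \in v -> paired e.
Proof. by rewrite inE => /andP[_ /forallP allp] ev; have := allp e; rewrite ev. Qed.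

(* Members of [Apaired] through [x] are [{x, mate x, a, mate a}] with distinct
   pairs [{a, mate a}], so each uses two new paired points. *)
Lemma card_Apaired_through x : paired x ->
  2 * #|[set v in Apaired | x \in v]| <= #|paired_pts|.
Proof.
move=> px; set V := [set v in Apaired | x \in v].
have pts2 : 2 * #|V| <=
    \sum_(v in V) #|[set a in paired_pts | (a \in v) && (a \notin [set x; mate x])]|.
  rewrite mulnC -sum_nat_const leq_sum // => v; rewrite inE => /andP[vpair xv].
  apply: leq_trans (two_outside_mates (Apaired_member vpair) px xv) _.
  apply: subset_leq_card; apply/subsetP => e; rewrite [e \in _ :\: _]inE.
  by move=> /andP[ne ev]; rewrite inE [e \in paired_pts]inE (Apaired_paired vpair ev) ev ne.
apply: leq_trans pts2 _; rewrite sum_card_fibresC -sum1_card leq_sum // => a.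
rewrite inE => pa; apply/card_le1_eqP => v1 v2.
move=> /setIdP[/setIdP[v1pair xv1] /andP[av1]]; rewrite in_set2 negb_or.
move=> /andP[ax amx] /setIdP[/setIdP[v2pair xv2] /andP[av2 _]].
have [v1A v2A] := (Apaired_member v1pair, Apaired_member v2pair).
apply/esym/(member_eq_of_sub4 v1A v2A (uniq_mates px pa ax amx)) => //.
- by move=> e; rewrite !inE => /or4P[] /eqP->; rewrite ?mem_mate.
- by move=> e; rewrite !inE => /or4P[] /eqP->; rewrite ?mem_mate.
Qed.

Lemma card_Apaired : 8 * #|Apaired| <= #|paired_pts| * #|paired_pts|.
Proof.
have deg4 : 4 * #|Apaired| <= \sum_(x in paired_pts) #|[set v in Apaired | x \in v]|.
  rewrite (sum_card_fibresC paired_pts Apaired (fun x v => x \in v)).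
  rewrite mulnC -sum_nat_const leq_sum // => v vpair.
  rewrite -(A4 (Apaired_member vpair)); apply: subset_leq_card.
  by apply/subsetP => e ev; rewrite !inE ev (Apaired_paired vpair ev).
have : 2 * \sum_(x in paired_pts) #|[set v in Apaired | x \in v]| <=
    #|paired_pts| * #|paired_pts|.
  rewrite big_distrr /= -sum_nat_const leq_sum // => x; rewrite inE.
  exact: card_Apaired_through.
lia.
Qed.

Lemma card_classes :
  #|A| <= #|Apriv| + #|Aheavy| + #|Alight| + #|Apaired| + #|Amixed|.
Proof.
apply: leq_trans (_ : #|Apriv :|: Aheavy :|: Alight :|: Apaired :|: Amixed| <= _).
  apply: subset_leq_card; apply/subsetP => v vA; rewrite !in_setU.
  have [//|vnpriv] := boolP (v \in Apriv).
  have [vtl|vntl] := boolP (v \in Atwinless).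
    have [vh|vl] := boolP (heavy v).
      by rewrite [v \in Aheavy]inE vtl vh orbT.
    by rewrite [v \in Alight]inE vtl vl !orbT.
  have [_|vnpair] := boolP (v \in Apaired); first by rewrite !orbT.
  by rewrite [v \in Amixed]inE vA vnpriv vntl vnpair !orbT.
by do 4 (apply: leq_trans (leq_card_setU _ _) _; rewrite leq_add2r).
Qed.

Lemma card_twinless_paired : #|twinless_pts| + #|paired_pts| <= n.
Proof.
apply: (@leq_trans (#|paired_pts| + #|~: paired_pts|)); last by rewrite cardsC card_ord.
rewrite addnC leq_add2l.
apply: subset_leq_card; apply/subsetP => x; rewrite !inE.
exact: twinless_npaired.
Qed.

End Family.

Local Open Scope ring_scope.

Lemma le_mul_half (R : realFieldType) (a b c : R) : 0 <= a -> 0 <= b ->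
  c <= a ^+ 2 / 2 -> c <= b ^+ 2 / 2 -> c <= a * b / 2.
Proof.
move=> a0 b0; rewrite !expr2 => ca cb; have [ab|ba] := lerP a b.
  have : a * a <= a * b by rewrite ler_wpM2l.
  lra.
have : b * b <= a * b by rewrite ler_wpM2r // ltW.
lra.
Qed.

Lemma card_indep_bound (R : realType) (t : R) n (A : {set {set 'I_n}}) :
  0 < t -> vertex_set A -> independent_G41 A ->
  (dA A)%:R <= (t * n%:R) ^+ 2 / 2 ->
  (#|A|)%:R <= 129 * n%:R + (#|paired_pts A|)%:R ^+ 2 / 8
                + t * n%:R * (n%:R - (#|paired_pts A|)%:R) / 2.
Proof.
move=> t0 A4 A_indep dA_le.
have tn0 : 0 <= t * n%:R by rewrite mulr_ge0 // ltW.
have mixed_at_le x : x \in paired_pts A ->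
    (#|mixed_at A x|)%:R <= t * n%:R * (#|mixed_link A x|)%:R / 2 :> R.
  rewrite inE => px; apply: le_mul_half => //.
    by apply: le_trans dA_le; rewrite ler_nat card_mixed_at_le_dA.
  have := card_mixed_at_sq A4 A_indep px; rewrite -(ler_nat R) !natrM.
  by move=> h; rewrite ler_pdivlMr // expr2; lra.
have mixed_le : 2 * (#|Amixed A|)%:R <= t * n%:R / 2 *
    (\sum_(x in paired_pts A) #|mixed_link A x|)%:R :> R.
  have := card_Amixed_le_sum A4 A_indep; rewrite -(ler_nat R) natrM => /le_trans; apply.
  rewrite !natr_sum mulr_sumr ler_sum // => x /mixed_at_le.
  by rewrite mulrAC.
have link_le := sum_card_mixed_link A4 A_indep; rewrite -(ler_nat R) natrM in link_le.
have pts_le := card_twinless_paired A; rewrite -(ler_nat R) natrD in pts_le.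
have := card_classes A; rewrite -(ler_nat R) !natrD.
have := card_Apriv A; rewrite -(ler_nat R).
have := card_Aheavy A4 A_indep; rewrite -(ler_nat R) natrM.
have := card_Alight A4 A_indep; rewrite -(ler_nat R) natrM.
have := card_Apaired A4; rewrite -(ler_nat R) !natrM.
set S := (\sum_(x in _) _)%:R in mixed_le link_le.
set T := (#|twinless_pts A|)%:R in link_le pts_le.
set p := (#|paired_pts A|)%:R in pts_le *.
have : t * n%:R * S <= t * n%:R * (2 * (n%:R - p)) by rewrite ler_wpM2l //; lra.
lra.
Qed.

Lemma paired_interpolation (R : realFieldType) (t n p : R) :
  0 < t -> 0 < n -> 0 <= p -> p <= n ->
  p ^+ 2 / 8 + t * n * (n - p) / 2 <= Num.max (n ^+ 2 / 8) (t * n ^+ 2 / 2).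
Proof.
move=> t0 n0 p0 pn; set M := Num.max _ _.
have M1 : n ^+ 2 / 8 <= M by rewrite le_max lexx.
have M2 : t * n ^+ 2 / 2 <= M by rewrite le_max lexx orbT.
have h1 : 0 <= p * (M - n ^+ 2 / 8) by rewrite mulr_ge0 // subr_ge0.
have h2 : 0 <= (n - p) * (M - t * n ^+ 2 / 2) by rewrite mulr_ge0 // subr_ge0.
have h3 : 0 <= p * (n - p) by rewrite mulr_ge0 // subr_ge0.
have : p * n / 8 + t * n * (n - p) / 2 <= M by rewrite -(ler_pM2l n0); nra.
nra.
Qed.

Theorem theorem6 (R : realType) (t : R) (ht0 : 0 < t) (ht1 : t < 1) :
  forall eps : R, 0 < eps ->
  exists N : nat, forall n : nat, (N <= n)%N ->
  forall A : {set {set 'I_n}},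
    vertex_set A -> independent_G41 A ->
    (dA A)%:R <= (t * n%:R) ^+ 2 / 2 ->
    (#|A|)%:R <= (1 + eps) * Num.max (n%:R ^+ 2 / 8) (t * n%:R ^+ 2 / 2).
Proof.
(* [129 n <= eps n^2 / 8] as soon as [n >= 8 * 129 / eps]. *)
move=> eps eps0; have K0 : 0 <= 1032 / eps by rewrite divr_ge0 // ltW.
exists (Num.Def.archi_bound (1032 / eps)) => n n_ge A A4 A_indep dA_le.
have n_large : 1032 / eps < n%:R.
  by apply: lt_le_trans (archi_boundP K0) _; rewrite ler_nat.
have eps_n : 1032 < eps * n%:R by rewrite mulrC -ltr_pdivrMr.
have n0 : 0 < n%:R :> R by apply: le_lt_trans n_large.
have p_le : (#|paired_pts A|)%:R <= n%:R :> R.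
  by rewrite ler_nat (leq_trans (leq_addl _ _) (card_twinless_paired A)).
have interp := paired_interpolation ht0 n0 (ler0n _ _) p_le.
have bound := card_indep_bound ht0 A4 A_indep dA_le.
set M := Num.max _ _ in interp *.
have M1 : n%:R ^+ 2 / 8 <= M by rewrite le_max lexx.
have : 0 <= (eps * n%:R - 1032) * n%:R by rewrite mulr_ge0 //; lra.
have : eps * (n%:R ^+ 2 / 8) <= eps * M by rewrite ler_wpM2l // ltW.
nra.
Qed.
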